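(* Let $\mathbb X$ be a basic space and $\mathcal D=(D,<,\rho)$ a computable partially ordered set. 1. Every partial function $F:\mathbb X\to D$ in $\mathrm{Max}_{\mathrm{PR}}[\mathbb X\to\mathcal D]\cap\mathrm{Min}_{\mathrm{PR}}[\mathbb X\to\mathcal D]$ is the restriction of a partial computable function $\mathbb X\to D$ to some $\Sigma^0_1\wedge\Pi^0_1$ subset of $\mathbb X$. In particular, every total function in $\mathrm{Max}_{\mathrm{PR}}[\mathbb X\to\mathcal D]\cap\mathrm{Min}_{\mathrm{PR}}[\mathbb X\to\mathcal D]$ is computable. 2. If $D$ has no maximal (resp. no minimal) element, then the restriction of any partial computable function $\mathbb X\to D$ to any $\Sigma^0_1\wedge\Pi^0_1$ subset of $\mathbb X$ is in $\mathrm{Max}_{\mathrm{PR}}[\mathbb X\to\mathcal D]$ (resp. $\mathrm{Min}_{\mathrm{PR}}[\mathbb X\to\mathcal D]$). 3. If $D$ has neither maximal nor minimal elements, then $\mathrm{Max}_{\mathrm{PR}}[\mathbb X\to\mathcal D]\cap\mathrm{Min}_{\mathrm{PR}}[\mathbb X\to\mathcal D]$ is exactly the family of restrictions of partial computable functions $\mathbb X\to D$ to $\Sigma^0_1\wedge\Pi^0_1$ subsets of $\mathbb X$.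
   Context: A basic space is a finite non-empty product of sets each of which is $\mathbb N$, $\mathbb Z$, or $A^*$ for some finite alphabet $A$. A computable partially ordered set is a triple $\mathcal D=(D,<,\rho)$ where $\rho:\mathbb N\to D$ is a bijection and $<$ is a strict partial order on $D$ with $\{(m,n):\rho(m)<\rho(n)\}$ computable; a partial function into $D$ is partial computable if its composition with $\rho^{-1}$ is. For a partial $f:\mathbb X\times\mathbb N\to D$ monotone increasing (resp. decreasing) in its second argument on its domain, $\max^{\mathcal D}f$ (resp. $\min^{\mathcal D}f$) is the partial function defined exactly at those $x$ for which $\{f(x,t):t\in\mathbb N,\ f(x,t)\text{ defined}\}$ is finite and non-empty, with value its maximum (resp. minimum) element. $\mathrm{Max}_{\mathrm{PR}}[\mathbb X\to\mathcal D]$ (resp. $\mathrm{Min}_{\mathrm{PR}}[\mathbb X\to\mathcal D]$) is the class of all $\max^{\mathcal D}f$ with $f$ partial computable and increasing in its second argument (resp. all $\min^{\mathcal D}f$ with $f$ partial computable and decreasing in its second argument). A set $Z\subseteq\mathbb X$ is $\Sigma^0_1\wedge\Pi^0_1$ if $Z=\{x:\exists t\,R(x,t)\wedge\forall t\,S(x,t)\}$ for computable $R,S\subseteq\mathbb X\times\mathbb N$. The restriction of a partial function $G$ to $Z$ is the partial function with domain $\mathrm{dom}(G)\cap Z$ agreeing with $G$ there. *)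

From Stdlib Require Import Arith ZArith List.
Import ListNotations.

Inductive prog : Type :=
| PZero : prog
| PSucc : prog
| PProj : nat -> prog
| PComp : prog -> list prog -> prog
| PRec : prog -> prog -> prog
| PMu : prog -> prog.

Inductive eval : prog -> list nat -> nat -> Prop :=
| ev_zero : forall args, eval PZero args 0
| ev_succ : forall n args, eval PSucc (n :: args) (S n)
| ev_proj : forall i args v, nth_error args i = Some v -> eval (PProj i) args v
| ev_comp : forall f gs args ys y,
    Forall2 (fun g v => eval g args v) gs ys -> eval f ys y -> eval (PComp f gs) args y
| ev_rec0 : forall f g args y, eval f args y -> eval (PRec f g) (0 :: args) y
| ev_recS : forall f g n args r y,
    eval (PRec f g) (n :: args) r -> eval g (n :: r :: args) y ->
    eval (PRec f g) (S n :: args) y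
| ev_mu : forall f args n,
    eval f (n :: args) 0 ->
    (forall k, k < n -> exists m, eval f (k :: args) (S m)) ->
    eval (PMu f) args n.

(* An atom is N, Z, or A* for a finite alphabet A, taken (up to renaming) to be {0,...,k-1}. *)
Inductive atom : Type := ANat | AInt | AWord (k : nat).

Definition atom_t (a : atom) : Type :=
  match a with
  | ANat => nat
  | AInt => Z
  | AWord k => list {i : nat | i < k}
  end.

(* A basic space is a finite NON-EMPTY product: first factor a, remaining factors l. *)
Fixpoint bsp (a : atom) (l : list atom) : Type :=
  match l with
  | [] => atom_t a
  | b :: l' => (atom_t a * bsp b l')%type
  end.

Definition enc_int (z : Z) : nat :=
  if (0 <=? z)%Z then 2 * Z.to_nat z else 2 * Z.to_nat (- z) - 1.

(* bijective base-k numeration of words *)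
Definition enc_word (k : nat) (w : list {i : nat | i < k}) : nat :=
  fold_right (fun c acc => (proj1_sig c + 1) + k * acc) 0 w.

Definition enc_atom (a : atom) : atom_t a -> nat :=
  match a return atom_t a -> nat with
  | ANat => fun n => n
  | AInt => enc_int
  | AWord k => enc_word k
  end.

Fixpoint enc (a : atom) (l : list atom) : bsp a l -> list nat :=
  match l return bsp a l -> list nat with
  | [] => fun x => [enc_atom a x]
  | b :: l' => fun x => enc_atom a (fst x) :: enc b l' (snd x)
  end.

Definition computable_poset (D : Type) (lt : D -> D -> Prop) (rho : nat -> D) : Prop :=
  (forall d, ~ lt d d) /\
  (forall d e f, lt d e -> lt e f -> lt d f) /\
  (forall m n, rho m = rho n -> m = n) /\
  (forall d, exists n, rho n = d) /\
  (exists p, forall m n,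
      (lt (rho m) (rho n) -> eval p [m; n] 1) /\ (~ lt (rho m) (rho n) -> eval p [m; n] 0)).

Definition le_of {D : Type} (lt : D -> D -> Prop) (d e : D) : Prop := d = e \/ lt d e.

(* partial function X -> D : a function X -> option D (None = undefined) *)

Definition pcomp_fun {D : Type} (rho : nat -> D) (a : atom) (l : list atom)
    (F : bsp a l -> option D) : Prop :=
  exists p, forall x m, eval p (enc a l x) m <-> F x = Some (rho m).

Definition pcomp_fun2 {D : Type} (rho : nat -> D) (a : atom) (l : list atom)
    (f : bsp a l -> nat -> option D) : Prop :=
  exists p, forall x t m, eval p (enc a l x ++ [t]) m <-> f x t = Some (rho m).

Definition comp_rel (a : atom) (l : list atom) (R : bsp a l -> nat -> Prop) : Prop :=
  exists p, forall x t,
    (R x t -> eval p (enc a l x ++ [t]) 1) /\ (~ R x t -> eval p (enc a l x ++ [t]) 0).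

Definition sigma1_and_pi1 (a : atom) (l : list atom) (Z : bsp a l -> Prop) : Prop :=
  exists R S, comp_rel a l R /\ comp_rel a l S /\
    forall x, Z x <-> ((exists t, R x t) /\ (forall t, S x t)).

Definition restriction_of {X D : Type} (F G : X -> option D) (Z : X -> Prop) : Prop :=
  forall x, (Z x -> F x = G x) /\ (~ Z x -> F x = None).

Definition values {X D : Type} (f : X -> nat -> option D) (x : X) (d : D) : Prop :=
  exists t, f x t = Some d.

Definition finite_nonempty {D : Type} (S : D -> Prop) : Prop :=
  (exists d, S d) /\ (exists L : list D, forall d, S d -> In d L).

Definition is_maximum {D : Type} (lt : D -> D -> Prop) (S : D -> Prop) (d : D) : Prop :=
  S d /\ forall e, S e -> le_of lt e d.

Definition is_minimum {D : Type} (lt : D -> D -> Prop) (S : D -> Prop) (d : D) : Prop :=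
  S d /\ forall e, S e -> le_of lt d e.

Definition increasing2 {X D : Type} (lt : D -> D -> Prop) (f : X -> nat -> option D) : Prop :=
  forall x t t' d e, t <= t' -> f x t = Some d -> f x t' = Some e -> le_of lt d e.

Definition decreasing2 {X D : Type} (lt : D -> D -> Prop) (f : X -> nat -> option D) : Prop :=
  forall x t t' d e, t <= t' -> f x t = Some d -> f x t' = Some e -> le_of lt e d.

Definition is_maxD {X D : Type} (lt : D -> D -> Prop) (f : X -> nat -> option D)
    (F : X -> option D) : Prop :=
  forall x d, F x = Some d <->
    (finite_nonempty (values f x) /\ is_maximum lt (values f x) d).

Definition is_minD {X D : Type} (lt : D -> D -> Prop) (f : X -> nat -> option D)
    (F : X -> option D) : Prop :=
  forall x d, F x = Some d <->
    (finite_nonempty (values f x) /\ is_minimum lt (values f x) d).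

Definition MaxPR {D : Type} (lt : D -> D -> Prop) (rho : nat -> D) (a : atom) (l : list atom)
    (F : bsp a l -> option D) : Prop :=
  exists f, pcomp_fun2 rho a l f /\ increasing2 lt f /\ is_maxD lt f F.

Definition MinPR {D : Type} (lt : D -> D -> Prop) (rho : nat -> D) (a : atom) (l : list atom)
    (F : bsp a l -> option D) : Prop :=
  exists f, pcomp_fun2 rho a l f /\ decreasing2 lt f /\ is_minD lt f F.

From Stdlib Require Import Arith List Lia Bool Classical ClassicalEpsilon.
From Stdlib Require FinFun.
Import ListNotations.

(* If [F = max f = min g], then [F x = d] exactly when [d] is a value of both [f x] and [g x] such
   that all values of [f x] lie below it and all values of [g x] above it.  Having a common value
   is Σ⁰₁, the separation of the values is Π⁰₁, and the common value can be searched for; all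
   three only need a step-counting evaluator, which is itself computable.

   Conversely, for [G] computable and [Z = {x | ∃t R x t ∧ ∀t S x t}], let [f x t] be undefined
   until a witness of [R] is found, equal to [G x] while [S x] has not failed before [t], and equal
   to the [t]-th strict successor of [G x] afterwards.  Then [f] is increasing, and its set of
   values is the set of values of [G x] on [Z] and infinite or empty off [Z], so [max f] is [G]
   restricted to [Z]; without maximal elements, a strict successor is found by search.  Minima are
   maxima for the reversed order. *)

Section ProgInd.
Variable P : prog -> Prop.
Hypothesis HZero : P PZero.
Hypothesis HSucc : P PSucc.
Hypothesis HProj : forall i, P (PProj i).
Hypothesis HComp : forall f gs, P f -> Forall P gs -> P (PComp f gs).
Hypothesis HRec : forall f g, P f -> P g -> P (PRec f g).
Hypothesis HMu : forall f, P f -> P (PMu f).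

Fixpoint prog_nested_ind (p : prog) : P p :=
  match p with
  | PZero => HZero
  | PSucc => HSucc
  | PProj i => HProj i
  | PComp f gs => HComp f gs (prog_nested_ind f)
      ((fix go (l : list prog) : Forall P l :=
          match l with
          | [] => Forall_nil _
          | g :: l' => Forall_cons _ (prog_nested_ind g) (go l')
          end) gs)
  | PRec f g => HRec f g (prog_nested_ind f) (prog_nested_ind g)
  | PMu f => HMu f (prog_nested_ind f)
  end.
End ProgInd.

Section EvalInd.
Variable P : prog -> list nat -> nat -> Prop.
Hypothesis HZero : forall args, P PZero args 0.
Hypothesis HSucc : forall n args, P PSucc (n :: args) (S n).
Hypothesis HProj : forall i args v, nth_error args i = Some v -> P (PProj i) args v.
Hypothesis HComp : forall f gs args ys y,
  Forall2 (fun g v => P g args v) gs ys -> P f ys y -> P (PComp f gs) args y.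
Hypothesis HRec0 : forall f g args y, P f args y -> P (PRec f g) (0 :: args) y.
Hypothesis HRecS : forall f g n args r y,
  P (PRec f g) (n :: args) r -> P g (n :: r :: args) y -> P (PRec f g) (S n :: args) y.
Hypothesis HMu : forall f args n,
  P f (n :: args) 0 -> (forall k, k < n -> exists m, P f (k :: args) (S m)) -> P (PMu f) args n.

Fixpoint eval_nested_ind p args y (e : eval p args y) {struct e} : P p args y :=
  match e with
  | ev_zero args => HZero args
  | ev_succ n args => HSucc n args
  | ev_proj i args v H => HProj i args v H
  | ev_comp f gs args ys y Hgs Hf => HComp f gs args ys y
      ((fix go gs ys (h : Forall2 (fun g v => eval g args v) gs ys)
          : Forall2 (fun g v => P g args v) gs ys :=
          match h with
          | Forall2_nil _ => Forall2_nil _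
          | Forall2_cons _ _ hg hr => Forall2_cons _ _ (eval_nested_ind _ _ _ hg) (go _ _ hr)
          end) gs ys Hgs) (eval_nested_ind _ _ _ Hf)
  | ev_rec0 f g args y H => HRec0 f g args y (eval_nested_ind _ _ _ H)
  | ev_recS f g n args r y H1 H2 =>
      HRecS f g n args r y (eval_nested_ind _ _ _ H1) (eval_nested_ind _ _ _ H2)
  | ev_mu f args n H0 Hk => HMu f args n (eval_nested_ind _ _ _ H0)
      (fun k hk => match Hk k hk with ex_intro _ m e => ex_intro _ m (eval_nested_ind _ _ _ e) end)
  end.
End EvalInd.

(** * Clocked evaluation *)

(* [run s p args] evaluates [p] with every unbounded search cut off after [s] candidates.  Results
   are coded as [0] (no result) or [S y] (result [y]), also in [if_all_defined] and [mu_scan]. *)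
Definition if_all_defined (vs : list nat) (b : nat) : nat :=
  fold_right (fun v acc => match v with 0 => 0 | S _ => acc end) b vs.

(* Scans [h 0, ..., h (s-1)]: state [0] while every [h j] codes a positive value, [1] once some
   [h j] is undefined, and [S (S k)] once [h k] codes [0]. *)
Definition mu_scan (h : nat -> nat) (s : nat) : nat :=
  nat_rect (fun _ => nat) 0
    (fun j st => match st with
                 | 0 => match h j with 0 => 1 | 1 => S (S j) | _ => 0 end
                 | _ => st
                 end) s.

Fixpoint run (s : nat) (p : prog) (args : list nat) {struct p} : nat :=
  match p with
  | PZero => 1
  | PSucc => match args with n :: _ => S (S n) | [] => 0 end
  | PProj i => match nth_error args i with Some v => S v | None => 0 end
  | PComp f gs =>
      let vs := map (fun g => run s g args) gs in if_all_defined vs (run s f (map pred vs))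
  | PRec f g =>
      match args with
      | [] => 0
      | n :: rest =>
          nat_rect (fun _ => nat) (run s f rest)
            (fun k r => match r with 0 => 0 | S r' => run s g (k :: r' :: rest) end) n
      end
  | PMu f => pred (mu_scan (fun j => run s f (j :: args)) s)
  end.

Lemma mu_scan_searching h s : mu_scan h s = 0 -> forall i, i < s -> 2 <= h i.
Proof.
  induction s as [|s IH]; intros E i Hi; [lia|].
  unfold mu_scan in E, IH; simpl in E.
  destruct (nat_rect _ _ _ s) as [|st]; [|discriminate].
  destruct (h s) as [|[|v]] eqn:Ehs; try discriminate.
  destruct (Nat.eq_dec i s) as [->|]; [rewrite Ehs; lia | apply IH; auto; lia].
Qed.

Lemma mu_scan_found h s k :
  mu_scan h s = S (S k) -> h k = 1 /\ forall i, i < k -> 2 <= h i.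
Proof.
  induction s as [|s IH]; intros E; [discriminate|].
  unfold mu_scan in E, IH; simpl in E.
  destruct (nat_rect _ _ _ s) as [|st] eqn:Est; [|subst; auto].
  destruct (h s) as [|[|v]] eqn:Ehs; try discriminate.
  injection E as <-. split; [exact Ehs|]. apply mu_scan_searching, Est.
Qed.

Lemma mu_scan_least h k :
  (forall i, i < k -> 2 <= h i) -> h k = 1 ->
  forall s, (s <= k -> mu_scan h s = 0) /\ (k < s -> mu_scan h s = S (S k)).
Proof.
  intros Hbelow Hk s. induction s as [|s [IH1 IH2]]; [split; [reflexivity | lia]|].
  unfold mu_scan in *; simpl. split; intros Hs.
  - rewrite IH1 by lia. specialize (Hbelow s ltac:(lia)). destruct (h s) as [|[|]]; lia.
  - destruct (Nat.eq_dec s k) as [->|].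
    + rewrite IH1, Hk by lia. reflexivity.
    + rewrite IH2 by lia. reflexivity.
Qed.

Lemma if_all_defined_S vs b y :
  if_all_defined vs b = S y -> Forall (fun v => v <> 0) vs /\ b = S y.
Proof.
  induction vs as [|[|v] vs IH]; simpl; intros H; [auto|discriminate|].
  destruct (IH H). split; auto.
Qed.

Lemma run_sound : forall p s args y, run s p args = S y -> eval p args y.
Proof.
  induction p as [| | i | f gs IHf IHgs | f g IHf IHg | f IHf] using prog_nested_ind;
    intros s args y Hrun; simpl in Hrun.
  - injection Hrun as <-; constructor.
  - destruct args; [discriminate|]. injection Hrun as <-; constructor.
  - destruct (nth_error args i) eqn:E; [|discriminate]. injection Hrun as <-; constructor; auto.
  - apply if_all_defined_S in Hrun as [Hdef Hf].
    econstructor; [|exact (IHf _ _ _ Hf)].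
    clear Hf. induction IHgs as [|g gs Hg _ IH]; simpl in *; constructor; inversion Hdef; subst.
    + apply (Hg s). destruct (run s g args); [contradiction|reflexivity].
    + auto.
  - destruct args as [|n rest]; [discriminate|].
    revert y Hrun. induction n as [|n IHn]; simpl; intros y Hrun.
    + constructor. eauto.
    + destruct (nat_rect _ _ _ n) as [|r]; [discriminate|].
      econstructor; [apply IHn; reflexivity | eauto].
  - destruct (mu_scan _ s) as [|[|k]] eqn:E; try discriminate.
    simpl in Hrun; injection Hrun as ->.
    destruct (mu_scan_found _ _ _ E) as [H0 Hbelow].
    constructor; [eauto|].
    intros k Hk. specialize (Hbelow k Hk).
    destruct (run s f (k :: args)) as [|[|m]] eqn:E2; try lia. eauto.
Qed.

Definition eventually (P : nat -> Prop) : Prop := exists s0, forall s, s0 <= s -> P s.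

Lemma eventually_and P Q : eventually P -> eventually Q -> eventually (fun s => P s /\ Q s).
Proof.
  intros [a Ha] [b Hb]. exists (max a b). intros s Hs. split; [apply Ha | apply Hb]; lia.
Qed.

Lemma eventually_below (P : nat -> nat -> Prop) n :
  (forall k, k < n -> eventually (P k)) -> eventually (fun s => forall k, k < n -> P k s).
Proof.
  induction n as [|n IH]; intros H; [exists 0; intros; lia|].
  destruct (eventually_and _ _ (IH (fun k Hk => H k ltac:(lia))) (H n ltac:(lia))) as [s0 Hs0].
  exists s0. intros s Hs k Hk. destruct (Hs0 s Hs) as [Hlt Hn].
  destruct (Nat.eq_dec k n) as [->|]; auto. apply Hlt; lia.
Qed.

Lemma run_complete : forall p args y, eval p args y -> eventually (fun s => run s p args = S y).
Proof.
  apply eval_nested_ind.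
  - intros. exists 0; reflexivity.
  - intros. exists 0; reflexivity.
  - intros i args v H. exists 0; intros; simpl; rewrite H; reflexivity.
  - intros f gs args ys y Hgs Hf.
    assert (Hvs : eventually (fun s => map (fun g => run s g args) gs = map S ys)).
    { clear Hf. induction Hgs as [|g v gs ys Hg _ IH]; [exists 0; reflexivity|].
      destruct (eventually_and _ _ Hg IH) as [s0 Hs0]. exists s0. intros s Hs.
      destruct (Hs0 s Hs) as [E1 E2]. simpl. rewrite E1, E2. reflexivity. }
    destruct (eventually_and _ _ Hvs Hf) as [s0 Hs0]. exists s0. intros s Hs.
    destruct (Hs0 s Hs) as [Evs Ef]. simpl. rewrite Evs, map_map, map_id, Ef.
    clear. induction ys; simpl; auto.
  - intros f g args y [s0 Hs0]. exists s0. intros s Hs. simpl. auto.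
  - intros f g n args r y Hr Hy.
    destruct (eventually_and _ _ Hr Hy) as [s0 Hs0]. exists s0. intros s Hs.
    destruct (Hs0 s Hs) as [E1 E2]. simpl in E1 |- *. rewrite E1. exact E2.
  - intros f args n H0 Hbelow.
    destruct (eventually_below (fun k s => 2 <= run s f (k :: args)) n) as [b Hb].
    { intros k Hk. destruct (Hbelow k Hk) as [m [c Hc]]. exists c. intros s Hs. rewrite Hc; lia. }
    destruct H0 as [a Ha]. exists (max (max a b) (S n)). intros s Hs. simpl.
    rewrite (proj2 (mu_scan_least (fun j => run s f (j :: args)) n
                      (fun i Hi => Hb s ltac:(lia) i Hi) (Ha s ltac:(lia)) s)) by lia.
    reflexivity.
Qed.

Lemma eval_functional p args y1 y2 : eval p args y1 -> eval p args y2 -> y1 = y2.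
Proof.
  intros H1 H2. apply run_complete in H1 as [a Ha]. apply run_complete in H2 as [b Hb].
  specialize (Ha (max a b) ltac:(lia)). specialize (Hb (max a b) ltac:(lia)). congruence.
Qed.

Lemma eval_rec f g rest y0 (h : nat -> nat -> nat) k :
  eval f rest y0 -> (forall j acc, eval g (j :: acc :: rest) (h j acc)) ->
  eval (PRec f g) (k :: rest) (nat_rect (fun _ => nat) y0 h k).
Proof.
  intros Hf Hg. induction k as [|k IH]; simpl; [constructor; exact Hf|].
  econstructor; [exact IH | apply Hg].
Qed.

Definition projs (i k : nat) : list prog := map PProj (seq i k).

Lemma eval_projs pre xs post :
  Forall2 (fun g v => eval g (pre ++ xs ++ post) v) (projs (length pre) (length xs)) xs.
Proof.
  revert pre; induction xs as [|x xs IH]; intros pre; simpl; constructor.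
  - constructor. rewrite nth_error_app2, Nat.sub_diag by lia. reflexivity.
  - specialize (IH (pre ++ [x])). rewrite <- app_assoc, length_app, Nat.add_1_r in IH. exact IH.
Qed.

Lemma eval_projs_suffix pre xs :
  Forall2 (fun g v => eval g (pre ++ xs) v) (projs (length pre) (length xs)) xs.
Proof. pose proof (eval_projs pre xs []) as H. rewrite app_nil_r in H. exact H. Qed.

Definition Succ (X : prog) : prog := PComp PSucc [X].

Lemma eval_succ X args x : eval X args x -> eval (Succ X) args (S x).
Proof. intros. econstructor; [repeat constructor; eauto | constructor]. Qed.

Fixpoint Const (c : nat) : prog := match c with 0 => PZero | S c => Succ (Const c) end.

Lemma eval_const c args : eval (Const c) args c.
Proof. induction c; simpl; [constructor | apply eval_succ; auto]. Qed.

Definition Pred (X : prog) : prog := PComp (PRec PZero (PProj 0)) [X].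

Lemma eval_pred X args x : eval X args x -> eval (Pred X) args (pred x).
Proof.
  intros. econstructor; [repeat constructor; eauto|].
  replace (pred x) with (nat_rect (fun _ => nat) 0 (fun j _ => j) x) by (destruct x; reflexivity).
  apply eval_rec; repeat constructor.
Qed.

(* A strict conditional: [C], [X] and [Y] must all halt. *)
Definition Cond (C X Y : prog) : prog := PComp (PRec (PProj 1) (PProj 2)) [C; X; Y].

Lemma eval_cond C X Y args c x y :
  eval C args c -> eval X args x -> eval Y args y ->
  eval (Cond C X Y) args (match c with 0 => y | S _ => x end).
Proof.
  intros. econstructor; [repeat constructor; eauto|].
  replace (match c with 0 => y | S _ => x end)
    with (nat_rect (fun _ => nat) y (fun _ _ => x) c) by (destruct c; reflexivity).
  apply eval_rec; repeat constructor.
Qed.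

Definition IsZero (X : prog) : prog := Cond X PZero (Const 1).
Definition And (X Y : prog) : prog := Cond X Y PZero.
Definition Or (X Y : prog) : prog := Cond X (Const 1) Y.

Lemma eval_isZero X args x : eval X args x -> eval (IsZero X) args (Nat.b2n (x =? 0)).
Proof.
  intros. replace (Nat.b2n (x =? 0)) with (match x with 0 => 1 | S _ => 0 end)
    by (destruct x; reflexivity).
  apply eval_cond; auto using eval_const; constructor.
Qed.

Lemma eval_negb X args b : eval X args (Nat.b2n b) -> eval (IsZero X) args (Nat.b2n (negb b)).
Proof. intros H. apply eval_isZero in H. destruct b; exact H. Qed.

Lemma eval_andb X Y args b c :
  eval X args (Nat.b2n b) -> eval Y args (Nat.b2n c) -> eval (And X Y) args (Nat.b2n (b && c)).
Proof.
  intros HX HY. pose proof (eval_cond _ _ PZero _ _ _ 0 HX HY (ev_zero _)) as H.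
  destruct b; exact H.
Qed.

Lemma eval_orb X Y args b c :
  eval X args (Nat.b2n b) -> eval Y args (Nat.b2n c) -> eval (Or X Y) args (Nat.b2n (b || c)).
Proof.
  intros HX HY. pose proof (eval_cond _ _ _ _ _ _ _ HX (eval_const 1 args) HY) as H.
  destruct b; exact H.
Qed.

Definition Sub (U V : prog) : prog := PComp (PRec (PProj 0) (Pred (PProj 1))) [V; U].

Lemma eval_sub U V args u v : eval U args u -> eval V args v -> eval (Sub U V) args (u - v).
Proof.
  intros. apply ev_comp with (ys := [v; u]); [repeat constructor; auto|].
  replace (u - v) with (nat_rect (fun _ => nat) u (fun _ acc => pred acc) v).
  - apply eval_rec; [repeat constructor|]. intros. apply eval_pred. repeat constructor.
  - clear. induction v; simpl; [lia | rewrite IHv; lia].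
Qed.

Definition Eqb (U V : prog) : prog := And (IsZero (Sub U V)) (IsZero (Sub V U)).

Lemma eval_eqb U V args u v :
  eval U args u -> eval V args v -> eval (Eqb U V) args (Nat.b2n (u =? v)).
Proof.
  intros HU HV.
  replace (u =? v) with ((u - v =? 0) && (v - u =? 0)).
  - apply eval_andb; apply eval_isZero, eval_sub; auto.
  - destruct (Nat.eqb_spec u v); apply eq_true_iff_eq; rewrite andb_true_iff, !Nat.eqb_eq; lia.
Qed.

Definition exists_below (s : nat) (P : nat -> bool) : bool := existsb P (seq 0 s).

Lemma exists_below_spec s P : exists_below s P = true <-> exists t, t < s /\ P t = true.
Proof.
  unfold exists_below. rewrite existsb_exists.
  split; intros [t [Ht HP]]; exists t; rewrite in_seq in *; split; auto; lia.
Qed.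

Definition Bex (k n : nat) (P : prog) : prog :=
  PComp (PRec PZero (Or (PProj 1) (PComp P (PProj 0 :: projs 2 n)))) (PProj k :: projs 0 n).

Lemma eval_bex k n P args c (h : nat -> bool) :
  length args = n -> nth_error args k = Some c ->
  (forall j, eval P (j :: args) (Nat.b2n (h j))) ->
  eval (Bex k n P) args (Nat.b2n (exists_below c h)).
Proof.
  intros Hlen Hk HP. econstructor.
  { constructor; [constructor; exact Hk|]. subst n. apply (eval_projs_suffix []). }
  unfold exists_below. replace (Nat.b2n (existsb h (seq 0 c)))
    with (nat_rect (fun _ => nat) 0
            (fun j acc => match acc with 0 => Nat.b2n (h j) | S _ => 1 end) c).
  - apply eval_rec; [constructor|]. intros j acc.
    apply eval_cond; [constructor; reflexivity | apply eval_const|].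
    econstructor; [|apply HP]. constructor; [repeat constructor|].
    subst n. apply (eval_projs_suffix [j; acc]).
  - clear. induction c as [|c IH]; [reflexivity|].
    rewrite seq_S, existsb_app. simpl. rewrite IH.
    destruct (existsb h (seq 0 c)), (h c); reflexivity.
Qed.

Lemma eval_comp_inv f gs args y :
  eval (PComp f gs) args y -> exists vs, Forall2 (fun g v => eval g args v) gs vs /\ eval f vs y.
Proof. intros E. inversion E. eauto. Qed.

Lemma eval_comp_iff f gs args vs y :
  Forall2 (fun g v => eval g args v) gs vs -> eval (PComp f gs) args y <-> eval f vs y.
Proof.
  intros Hvs. split; [|econstructor; eauto].
  intros (ws & Hws & Hf)%eval_comp_inv. replace vs with ws; [exact Hf|].
  clear Hf. revert vs Hvs. induction Hws; intros vs Hvs; inversion Hvs; subst; [reflexivity|].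
  f_equal; eauto using eval_functional.
Qed.

Lemma least_true (b : nat -> bool) :
  (exists k, b k = true) -> exists k, b k = true /\ forall j, j < k -> b j = false.
Proof.
  intros [k Hk]. induction k as [k IH] using lt_wf_ind.
  destruct (classic (exists j, j < k /\ b j = true)) as [[j [Hj Hbj]]|Hnone].
  - exact (IH j Hj Hbj).
  - exists k. split; [exact Hk|]. intros j Hj. apply not_true_is_false. intros Hbj. eauto.
Qed.

Lemma eval_mu_isZero T args (b : nat -> bool) k :
  (forall j, eval T (j :: args) (Nat.b2n (b j))) ->
  eval (PMu (IsZero T)) args k <-> b k = true /\ forall j, j < k -> b j = false.
Proof.
  intros HT. assert (HnT : forall j, eval (IsZero T) (j :: args) (Nat.b2n (negb (b j))))
    by (intros; apply eval_negb, HT).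
  split.
  - intros E. inversion E as [| | | | | |T' args' k' H0 Hbelow]; subst. split.
    + pose proof (eval_functional _ _ _ _ (HnT k) H0). destruct (b k); [reflexivity | discriminate].
    + intros j Hj. destruct (Hbelow j Hj) as [m Hm].
      pose proof (eval_functional _ _ _ _ (HnT j) Hm). destruct (b j); [discriminate | reflexivity].
  - intros [Hk Hbelow]. constructor; [specialize (HnT k); rewrite Hk in HnT; exact HnT|].
    intros j Hj. exists 0. specialize (HnT j). rewrite (Hbelow j Hj) in HnT. exact HnT.
Qed.

(** * Clocked evaluation is computable *)

Definition MuScan (T : prog) : prog :=
  PRec PZero
    (Cond (PProj 1) (PProj 1) (Cond T (Cond (Pred T) PZero (Succ (Succ (PProj 0)))) (Const 1))).

Lemma eval_muScan T rest (h : nat -> nat) s :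
  (forall j st, eval T (j :: st :: rest) (h j)) -> eval (MuScan T) (s :: rest) (mu_scan h s).
Proof.
  intros HT. apply eval_rec; [constructor|]. intros j st.
  match goal with |- eval _ _ ?v =>
    replace v with (match st with
                    | 0 => match h j with
                           | 0 => 1
                           | S _ => match pred (h j) with 0 => S (S j) | S _ => 0 end
                           end
                    | S _ => st
                    end)
      by (destruct st; [destruct (h j) as [|[|]]|]; reflexivity) end.
  apply eval_cond; [constructor; reflexivity | constructor; reflexivity|].
  apply eval_cond; [apply HT | | exact (eval_const 1 _)].
  apply eval_cond; [apply eval_pred, HT | constructor|].
  apply eval_succ, eval_succ. constructor. reflexivity.
Qed.

Fixpoint compile (p : prog) (n : nat) : prog :=
  match p with
  | PZero => Const 1
  | PSucc => match n with 0 => PZero | _ => Succ (Succ (PProj 1)) end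
  | PProj i => if i <? n then Succ (PProj (S i)) else PZero
  | PComp f gs =>
      let Bs := map (fun g => compile g n) gs in
      fold_right (fun B acc => Cond B acc PZero)
        (PComp (compile f (length gs)) (PProj 0 :: map Pred Bs)) Bs
  | PRec f g =>
      match n with
      | 0 => PZero
      | S n' =>
          PComp
            (PRec (compile f n')
               (Cond (PProj 1)
                  (PComp (compile g (S (S n')))
                     (PProj 2 :: PProj 0 :: Pred (PProj 1) :: projs 3 n'))
                  PZero))
            (PProj 1 :: PProj 0 :: projs 2 n')
      end
  | PMu f =>
      let T := PComp (compile f (S n)) (PProj 2 :: PProj 0 :: projs 3 n) in
      Pred (PComp (MuScan T) (PProj 0 :: PProj 0 :: projs 1 n))
  end.

Lemma eval_if_all_defined Bs vs body b args :
  Forall2 (fun B v => eval B args v) Bs vs -> eval body args b ->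
  eval (fold_right (fun B acc => Cond B acc PZero) body Bs) args (if_all_defined vs b).
Proof.
  intros HBs Hbody. induction HBs as [|B v Bs vs HB _ IH]; [exact Hbody|].
  simpl. pose proof (eval_cond _ _ _ _ _ _ 0 HB IH (ev_zero _)) as H. destruct v; exact H.
Qed.

Lemma eval_compile p n s args :
  length args = n -> eval (compile p n) (s :: args) (run s p args).
Proof.
  revert n s args.
  induction p as [| | i | f gs IHf IHgs | f g IHf IHg | f IHf] using prog_nested_ind;
    intros n s args Hlen; simpl.
  - exact (eval_const 1 _).
  - destruct args as [|x r]; simpl in Hlen; subst n.
    + constructor.
    + apply eval_succ, eval_succ. constructor. reflexivity.
  - destruct (Nat.ltb_spec i n).
    + destruct (nth_error args i) as [v|] eqn:E.
      * apply eval_succ. constructor. exact E.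
      * apply nth_error_None in E. lia.
    + rewrite (proj2 (nth_error_None args i)) by lia. constructor.
  - set (vs := map (fun g => run s g args) gs).
    assert (HBs : Forall2 (fun B v => eval B (s :: args) v) (map (fun g => compile g n) gs) vs).
    { subst vs. induction IHgs; simpl; constructor; auto. }
    apply eval_if_all_defined; [exact HBs|].
    econstructor; [|apply IHf; unfold vs; rewrite !length_map; reflexivity].
    constructor; [constructor; reflexivity|].
    clear -HBs. induction HBs; simpl; constructor; auto using eval_pred.
  - destruct args as [|k r]; simpl in Hlen; subst n; [constructor|].
    econstructor.
    { constructor; [constructor; reflexivity|]. constructor; [constructor; reflexivity|].
      apply (eval_projs_suffix [s; k]). }
    apply eval_rec; [apply IHf; reflexivity|]. intros j acc.
    replace (match acc with 0 => 0 | S r' => run s g (j :: r' :: r) end)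
      with (match acc with 0 => 0 | S _ => run s g (j :: pred acc :: r) end)
      by (destruct acc; reflexivity).
    apply eval_cond; [constructor; reflexivity| |constructor].
    econstructor; [|apply IHg; reflexivity].
    constructor; [constructor; reflexivity|]. constructor; [constructor; reflexivity|].
    constructor; [apply eval_pred; constructor; reflexivity|].
    apply (eval_projs_suffix [j; acc; s]).
  - apply eval_pred. econstructor.
    { constructor; [constructor; reflexivity|]. constructor; [constructor; reflexivity|].
      subst n. apply (eval_projs_suffix [s]). }
    apply eval_muScan. intros j st. econstructor; [|apply IHf; simpl; congruence].
    constructor; [constructor; reflexivity|]. constructor; [constructor; reflexivity|].
    subst n. apply (eval_projs_suffix [j; st; s]).
Qed.

Lemma length_enc a l (x : bsp a l) : length (enc a l x) = S (length l).
Proof. revert a x; induction l as [|b l IH]; intros a x; simpl; auto. Qed.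

Definition partial_of_prog {X D : Type} (rho : nat -> D) (p : prog) (args : X -> list nat) (x : X)
  : option D :=
  match excluded_middle_informative (exists y, eval p (args x) y) with
  | left H => Some (rho (proj1_sig (constructive_indefinite_description _ H)))
  | right _ => None
  end.

Lemma partial_of_prog_spec {X D : Type} (rho : nat -> D) p (args : X -> list nat) x m :
  (forall m n, rho m = rho n -> m = n) ->
  eval p (args x) m <-> partial_of_prog rho p args x = Some (rho m).
Proof.
  intros Hinj. unfold partial_of_prog.
  destruct (excluded_middle_informative _) as [H|H].
  - destruct (constructive_indefinite_description _ H) as [y Hy]; simpl. split.
    + intros Hm. rewrite (eval_functional _ _ _ _ Hm Hy). reflexivity.
    + intros E. injection E as E. apply Hinj in E. subst. exact Hy.
  - split; [intros Hm; exfalso; eauto | discriminate].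
Qed.

Lemma comp_rel_of_bool a l p (r : bsp a l -> nat -> bool) :
  (forall x t, eval p (enc a l x ++ [t]) (Nat.b2n (r x t))) ->
  comp_rel a l (fun x t => r x t = true).
Proof.
  intros Hp. exists p. intros x t. specialize (Hp x t).
  split; intros H; [rewrite H in Hp | apply not_true_is_false in H; rewrite H in Hp]; exact Hp.
Qed.

Definition decide {P : Prop} : bool := if excluded_middle_informative P then true else false.

Lemma decide_spec (P : Prop) : @decide P = true <-> P.
Proof. unfold decide. destruct (excluded_middle_informative P); split; auto; discriminate. Qed.

Lemma eval_decide p args (P : Prop) :
  (P -> eval p args 1) -> (~ P -> eval p args 0) -> eval p args (Nat.b2n (@decide P)).
Proof. intros H1 H0. unfold decide. destruct (excluded_middle_informative P); auto. Qed.

Lemma eval_last_first P L s xs v :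
  length xs = L -> eval P (s :: xs) v -> eval (PComp P (PProj L :: projs 0 L)) (xs ++ [s]) v.
Proof.
  intros Hlen HP. econstructor; [|exact HP]. constructor.
  - constructor. rewrite nth_error_app2, Hlen, Nat.sub_diag by lia. reflexivity.
  - rewrite <- Hlen. apply (eval_projs [] xs [s]).
Qed.

(** * Functions that are both a maximum and a minimum *)

Lemma le_of_antisym {D : Type} (lt : D -> D -> Prop) :
  (forall d, ~ lt d d) -> (forall d e f, lt d e -> lt e f -> lt d f) ->
  forall d e, le_of lt d e -> le_of lt e d -> d = e.
Proof. intros irr trans d e [H1|H1] [H2|H2]; auto. exfalso; apply (irr d); eauto. Qed.

Section MaxMin.
Context {X D : Type} (lt : D -> D -> Prop).
Hypothesis lt_irrefl : forall d, ~ lt d d.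
Hypothesis lt_trans : forall d e f, lt d e -> lt e f -> lt d f.
Variables f g : X -> nat -> option D.

Definition agree_at (x : X) (d : D) : Prop :=
  values f x d /\ values g x d /\
  (forall e, values f x e -> le_of lt e d) /\ (forall e, values g x e -> le_of lt d e).

Definition have_common_value (x : X) : Prop := exists e, values f x e /\ values g x e.

Definition common_values_separate (x : X) : Prop :=
  forall e, values f x e -> values g x e ->
  (forall e', values f x e' -> le_of lt e' e) /\ (forall e', values g x e' -> le_of lt e e').

Lemma maxD_minD_some_iff F x d :
  increasing2 lt f -> is_maxD lt f F -> is_minD lt g F -> F x = Some d <-> agree_at x d.
Proof.
  intros Hinc Hmax Hmin. split.
  - intros H. destruct (proj1 (Hmax x d) H) as [_ [Hfd Hfub]].
    destruct (proj1 (Hmin x d) H) as [_ [Hgd Hglb]]. repeat split; auto.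
  - intros (Hfd & _ & Hfub & _). apply Hmax. destruct Hfd as [t1 Ht1].
    split; [split|split; [exists t1; exact Ht1 | exact Hfub]].
    + exists d, t1. exact Ht1.
    (* increasing [f] is constant [d] from [t1] on, so its values all occur before [t1 + 1] *)
    + exists (flat_map (fun t => match f x t with Some e => [e] | None => [] end) (seq 0 (S t1))).
      intros e [t He]. apply in_flat_map.
      destruct (Nat.le_gt_cases t t1) as [Hle|Hgt].
      * exists t. split; [apply in_seq; lia | rewrite He; left; reflexivity].
      * assert (e = d) as ->.
        { apply (le_of_antisym lt lt_irrefl lt_trans); [apply Hfub; exists t; exact He|].
          eapply Hinc; [|exact Ht1|exact He]. lia. }
        exists t1. split; [apply in_seq; lia | rewrite Ht1; left; reflexivity].
Qed.

Lemma agree_at_common x d e : agree_at x d -> values f x e -> values g x e -> e = d.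
Proof.
  intros (_ & _ & Hfub & Hglb) Hf Hg.
  apply (le_of_antisym lt lt_irrefl lt_trans); [apply Hfub | apply Hglb]; assumption.
Qed.

Lemma ex_agree_at_iff x :
  (exists d, agree_at x d) <-> have_common_value x /\ common_values_separate x.
Proof.
  split.
  - intros [d Hd]. split; [exists d; split; apply Hd|].
    intros e Hf Hg. rewrite (agree_at_common x d e Hd Hf Hg). split; apply Hd.
  - intros [[e [Hf Hg]] Hsep]. exists e. destruct (Hsep e Hf Hg). repeat split; auto.
Qed.

End MaxMin.

(** * Clocked search for a common value *)

Definition clock (p : prog) (s : nat) (xs : list nat) (t : nat) : nat := run s p (xs ++ [t]).

Definition leb_code (ltb : nat -> nat -> bool) (u v : nat) : bool := (u =? v) || ltb u v.

Section ClockedTests.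
Variables (p q : prog) (ltb : nat -> nat -> bool) (s : nat) (xs : list nat).

Definition common_at (t1 t2 : nat) : bool :=
  negb (clock p s xs t1 =? 0) && (clock p s xs t1 =? clock q s xs t2).

Definition common_within : bool :=
  exists_below s (fun t1 => exists_below s (fun t2 => common_at t1 t2)).

Definition value_within (m : nat) : bool :=
  exists_below s (fun t1 => exists_below s (fun t2 =>
    (clock p s xs t1 =? S m) && (clock q s xs t2 =? S m))).

(* Seen with clock [s]: a value of [p] not below, or a value of [q] not above, a common value. *)
Definition violation_at (t1 t2 t3 : nat) : bool :=
  common_at t1 t2 &&
  (negb (clock p s xs t3 =? 0)
     && negb (leb_code ltb (pred (clock p s xs t3)) (pred (clock p s xs t1)))
   || negb (clock q s xs t3 =? 0)
     && negb (leb_code ltb (pred (clock p s xs t1)) (pred (clock q s xs t3)))).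

Definition violation_within : bool :=
  exists_below s (fun t1 => exists_below s (fun t2 =>
    exists_below s (fun t3 => violation_at t1 t2 t3))).

End ClockedTests.

Lemma common_at_spec p q s xs t1 t2 :
  common_at p q s xs t1 t2 = true <-> clock p s xs t1 <> 0 /\ clock p s xs t1 = clock q s xs t2.
Proof. unfold common_at. rewrite andb_true_iff, negb_true_iff, Nat.eqb_neq, Nat.eqb_eq. tauto. Qed.

Lemma violation_at_spec p q ltb s xs t1 t2 t3 :
  violation_at p q ltb s xs t1 t2 t3 = true <->
  common_at p q s xs t1 t2 = true /\
  (clock p s xs t3 <> 0 /\ leb_code ltb (pred (clock p s xs t3)) (pred (clock p s xs t1)) = false \/
   clock q s xs t3 <> 0 /\ leb_code ltb (pred (clock p s xs t1)) (pred (clock q s xs t3)) = false).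
Proof.
  unfold violation_at.
  rewrite andb_true_iff, orb_true_iff, !andb_true_iff, !negb_true_iff, !Nat.eqb_neq.
  tauto.
Qed.

Lemma common_within_value p q s xs :
  common_within p q s xs = true -> exists m, value_within p q s xs m = true.
Proof.
  intros H. apply exists_below_spec in H as [t1 [Ht1 H]].
  apply exists_below_spec in H as [t2 [Ht2 H]].
  apply common_at_spec in H as [Hdef Heq].
  destruct (clock p s xs t1) as [|m] eqn:E; [contradiction|]. exists m.
  apply exists_below_spec. exists t1. split; [exact Ht1|]. apply exists_below_spec. exists t2.
  split; [exact Ht2|]. rewrite E, <- Heq, Nat.eqb_refl. reflexivity.
Qed.

(* On [pre ++ s :: xs] with [length pre = i], runs the clocked copy [B] of a program with clock [s]
   on [xs ++ [t]], where [t] is the [j]-th entry of [pre]. *)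
Definition Clocked (B : prog) (i L j : nat) : prog :=
  PComp B (PProj i :: projs (S i) L ++ [PProj j]).

Lemma eval_clocked p L pre s xs j t :
  length xs = L -> nth_error pre j = Some t ->
  eval (Clocked (compile p (S L)) (length pre) L j) (pre ++ s :: xs) (clock p s xs t).
Proof.
  intros Hlen Hj. econstructor; [|apply eval_compile; rewrite length_app; simpl; lia].
  constructor.
  - constructor. rewrite nth_error_app2, Nat.sub_diag by lia. reflexivity.
  - apply Forall2_app.
    + subst L.
      replace (S (length pre)) with (length (pre ++ [s])) by (rewrite length_app; simpl; lia).
      replace (pre ++ s :: xs) with ((pre ++ [s]) ++ xs) by (rewrite <- app_assoc; reflexivity).
      apply eval_projs_suffix.
    + constructor; [|constructor]. constructor.
      rewrite nth_error_app1; [exact Hj | apply nth_error_Some; congruence].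
Qed.

Definition IsPositive (X : prog) : prog := IsZero (IsZero X).

Lemma eval_isPositive X args x :
  eval X args x -> eval (IsPositive X) args (Nat.b2n (negb (x =? 0))).
Proof. intros. apply eval_negb, eval_isZero. assumption. Qed.

Definition Leb (pLT U V : prog) : prog := Or (Eqb U V) (PComp pLT [U; V]).

Section ClockedPrograms.
Variables (p q pLT : prog) (ltb : nat -> nat -> bool) (L : nat).
Hypothesis eval_pLT : forall u v, eval pLT [u; v] (Nat.b2n (ltb u v)).
Let Bp := compile p (S L).
Let Bq := compile q (S L).

Definition CommonAt (i j1 j2 : nat) : prog :=
  And (IsPositive (Clocked Bp i L j1)) (Eqb (Clocked Bp i L j1) (Clocked Bq i L j2)).

Definition CommonWithin : prog := Bex 0 (S L) (Bex 1 (S (S L)) (CommonAt 2 1 0)).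

Definition ValueWithin : prog :=
  Bex 1 (S (S L)) (Bex 2 (S (S (S L)))
    (And (Eqb (Clocked Bp 3 L 1) (Succ (PProj 2))) (Eqb (Clocked Bq 3 L 0) (Succ (PProj 2))))).

Definition ViolationWithin : prog :=
  let F1 := Clocked Bp 3 L 2 in let F3 := Clocked Bp 3 L 0 in let G3 := Clocked Bq 3 L 0 in
  Bex 0 (S L) (Bex 1 (S (S L)) (Bex 2 (S (S (S L)))
    (And (CommonAt 3 2 1)
       (Or (And (IsPositive F3) (IsZero (Leb pLT (Pred F3) (Pred F1))))
           (And (IsPositive G3) (IsZero (Leb pLT (Pred F1) (Pred G3)))))))).

Lemma eval_leb U V args u v :
  eval U args u -> eval V args v -> eval (Leb pLT U V) args (Nat.b2n (leb_code ltb u v)).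
Proof.
  intros HU HV. apply eval_orb; [apply eval_eqb; auto|].
  econstructor; [|apply eval_pLT]. repeat constructor; auto.
Qed.

Lemma eval_commonAt pre s xs t1 t2 j1 j2 :
  length xs = L -> nth_error pre j1 = Some t1 -> nth_error pre j2 = Some t2 ->
  eval (CommonAt (length pre) j1 j2) (pre ++ s :: xs) (Nat.b2n (common_at p q s xs t1 t2)).
Proof.
  intros Hlen H1 H2.
  apply eval_andb; [apply eval_isPositive | apply eval_eqb]; apply eval_clocked; auto.
Qed.

Lemma eval_commonWithin s xs :
  length xs = L -> eval CommonWithin (s :: xs) (Nat.b2n (common_within p q s xs)).
Proof.
  intros Hlen. apply eval_bex; [simpl; lia | reflexivity|]. intros t1.
  apply eval_bex; [simpl; lia | reflexivity|]. intros t2.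
  apply (eval_commonAt [t2; t1]); auto.
Qed.

Lemma eval_valueWithin m s xs :
  length xs = L -> eval ValueWithin (m :: s :: xs) (Nat.b2n (value_within p q s xs m)).
Proof.
  intros Hlen. apply eval_bex; [simpl; lia | reflexivity|]. intros t1.
  apply eval_bex; [simpl; lia | reflexivity|]. intros t2.
  apply eval_andb; apply eval_eqb;
    solve [apply (eval_clocked _ _ [t2; t1; m]); auto | apply eval_succ; constructor; reflexivity].
Qed.

Lemma eval_violationWithin s xs :
  length xs = L -> eval ViolationWithin (s :: xs) (Nat.b2n (violation_within p q ltb s xs)).
Proof.
  intros Hlen. apply eval_bex; [simpl; lia | reflexivity|]. intros t1.
  apply eval_bex; [simpl; lia | reflexivity|]. intros t2.
  apply eval_bex; [simpl; lia | reflexivity|]. intros t3.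
  assert (Hcl : forall j t, nth_error [t3; t2; t1] j = Some t ->
            eval (Clocked Bp 3 L j) ([t3; t2; t1] ++ s :: xs) (clock p s xs t) /\
            eval (Clocked Bq 3 L j) ([t3; t2; t1] ++ s :: xs) (clock q s xs t))
    by (intros; split; apply (eval_clocked _ _ [t3; t2; t1]); auto).
  destruct (Hcl 2 t1 eq_refl) as [F1 _]. destruct (Hcl 0 t3 eq_refl) as [F3 G3].
  apply eval_andb; [apply (eval_commonAt [t3; t2; t1]); auto|].
  apply eval_orb; apply eval_andb; auto using eval_isPositive;
    apply eval_negb, eval_leb; auto using eval_pred.
Qed.

Definition FirstCommonValue : prog :=
  PComp (PMu (IsZero ValueWithin)) (PMu (IsZero CommonWithin) :: projs 0 L).

Lemma eval_firstCommonValue s m xs :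
  length xs = L ->
  common_within p q s xs = true -> (forall s', s' < s -> common_within p q s' xs = false) ->
  value_within p q s xs m = true -> (forall m', m' < m -> value_within p q s xs m' = false) ->
  eval FirstCommonValue xs m.
Proof.
  intros Hlen Hs Hs' Hm Hm'.
  assert (Hxs : Forall2 (fun g v => eval g xs v) (projs 0 L) xs)
    by (rewrite <- Hlen; apply (eval_projs_suffix [])).
  apply ev_comp with (ys := s :: xs); [constructor; [|exact Hxs]|].
  - apply (eval_mu_isZero _ _ (fun s => common_within p q s xs)); auto.
    intros; apply eval_commonWithin; auto.
  - apply (eval_mu_isZero _ _ (fun m => value_within p q s xs m)); auto.
    intros; apply eval_valueWithin; auto.
Qed.

End ClockedPrograms.

Section ClockedSemantics.
Context {a : atom} {l : list atom} {D : Type} (lt : D -> D -> Prop) (rho : nat -> D).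
Hypothesis rho_inj : forall m n, rho m = rho n -> m = n.
Hypothesis rho_surj : forall d, exists n, rho n = d.
Hypothesis lt_irrefl : forall d, ~ lt d d.
Hypothesis lt_trans : forall d e f, lt d e -> lt e f -> lt d f.

Lemma clock_sound (f : bsp a l -> nat -> option D) p x t s m :
  (forall x t m, eval p (enc a l x ++ [t]) m <-> f x t = Some (rho m)) ->
  clock p s (enc a l x) t = S m -> f x t = Some (rho m).
Proof. intros Hp H. apply Hp. eapply run_sound. exact H. Qed.

Lemma clock_complete (f : bsp a l -> nat -> option D) p x t d :
  (forall x t m, eval p (enc a l x ++ [t]) m <-> f x t = Some (rho m)) ->
  f x t = Some d -> exists m, d = rho m /\ eventually (fun s => clock p s (enc a l x) t = S m).
Proof.
  intros Hp H. destruct (rho_surj d) as [m <-]. exists m. split; [reflexivity|].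
  apply run_complete, Hp, H.
Qed.

Let ltb (u v : nat) : bool := @decide (lt (rho u) (rho v)).

Lemma leb_code_spec u v : leb_code ltb u v = true <-> le_of lt (rho u) (rho v).
Proof.
  unfold leb_code, ltb, le_of. rewrite orb_true_iff, Nat.eqb_eq, decide_spec.
  split; intros [H|H]; auto.
Qed.

Variables (f g : bsp a l -> nat -> option D) (p q : prog).
Hypothesis eval_p : forall x t m, eval p (enc a l x ++ [t]) m <-> f x t = Some (rho m).
Hypothesis eval_q : forall x t m, eval q (enc a l x ++ [t]) m <-> g x t = Some (rho m).

Lemma value_within_sound s x m :
  value_within p q s (enc a l x) m = true -> values f x (rho m) /\ values g x (rho m).
Proof.
  intros H. apply exists_below_spec in H as [t1 [_ H]]. apply exists_below_spec in H as [t2 [_ H]].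
  apply andb_true_iff in H as [H1 H2]. apply Nat.eqb_eq in H1, H2.
  split; [exists t1; exact (clock_sound f p x t1 s m eval_p H1)
         | exists t2; exact (clock_sound g q x t2 s m eval_q H2)].
Qed.

Lemma ex_common_within_iff x :
  (exists s, common_within p q s (enc a l x) = true) <-> have_common_value f g x.
Proof.
  split.
  - intros [s Hs]. destruct (common_within_value _ _ _ _ Hs) as [m Hm].
    exists (rho m). exact (value_within_sound s x m Hm).
  - intros [e [[t1 Hf] [t2 Hg]]].
    destruct (clock_complete f p x t1 e eval_p Hf) as [m [-> Hpm]].
    destruct (clock_complete g q x t2 _ eval_q Hg) as [m' [Em Hqm]]. apply rho_inj in Em. subst m'.
    destruct (eventually_and _ _ Hpm Hqm) as [s0 Hs0].
    set (s := S (s0 + t1 + t2)). destruct (Hs0 s ltac:(lia)) as [E1 E2].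
    exists s. apply exists_below_spec. exists t1. split; [lia|].
    apply exists_below_spec. exists t2. split; [lia|].
    apply common_at_spec. rewrite E1, E2. split; [discriminate | reflexivity].
Qed.

Lemma no_violation_within_separate x :
  (forall s, violation_within p q ltb s (enc a l x) = false) -> common_values_separate lt f g x.
Proof.
  intros Hnone e [t1 Hf] [t2 Hg].
  destruct (clock_complete f p x t1 e eval_p Hf) as [m [-> Hpm]].
  destruct (clock_complete g q x t2 _ eval_q Hg) as [m' [Em Hqm]]. apply rho_inj in Em. subst m'.
  (* a value on the wrong side of [rho m] would be seen as a violation by a large enough clock *)
  assert (Hseen : forall r t3 m3, eventually (fun s => clock r s (enc a l x) t3 = S m3) ->
            exists s, clock p s (enc a l x) t1 = S m /\ clock q s (enc a l x) t2 = S m /\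
                      clock r s (enc a l x) t3 = S m3 /\
                      violation_at p q ltb s (enc a l x) t1 t2 t3 = false).
  { intros r t3 m3 H3. destruct (eventually_and _ _ (eventually_and _ _ Hpm Hqm) H3) as [s0 Hs0].
    set (s := S (s0 + t1 + t2 + t3)). destruct (Hs0 s ltac:(lia)) as [[E1 E2] E3].
    exists s. repeat split; auto.
    apply not_true_is_false. intros Hv. apply (proj2 (not_true_iff_false _) (Hnone s)).
    apply exists_below_spec. exists t1. split; [lia|]. apply exists_below_spec. exists t2.
    split; [lia|]. apply exists_below_spec. exists t3. split; [lia | exact Hv]. }
  split; intros e' [t3 H3].
  - destruct (clock_complete f p x t3 e' eval_p H3) as [m3 [-> H3']].
    destruct (Hseen p t3 m3 H3') as (s & E1 & E2 & E3 & Hv).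
    apply leb_code_spec. apply not_false_iff_true. intros Hle.
    enough (violation_at p q ltb s (enc a l x) t1 t2 t3 = true) by congruence.
    apply violation_at_spec. rewrite common_at_spec, E1, E2, E3. split; [split; congruence|].
    left. split; [discriminate | exact Hle].
  - destruct (clock_complete g q x t3 e' eval_q H3) as [m3 [-> H3']].
    destruct (Hseen q t3 m3 H3') as (s & E1 & E2 & E3 & Hv).
    apply leb_code_spec. apply not_false_iff_true. intros Hle.
    enough (violation_at p q ltb s (enc a l x) t1 t2 t3 = true) by congruence.
    apply violation_at_spec. rewrite common_at_spec, E1, E2, E3. split; [split; congruence|].
    right. split; [discriminate | exact Hle].
Qed.

Lemma separate_no_violation_within x :
  common_values_separate lt f g x -> forall s, violation_within p q ltb s (enc a l x) = false.
Proof.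
  intros Hsep s. apply not_true_is_false. intros Hv.
  apply exists_below_spec in Hv as [t1 [_ Hv]]. apply exists_below_spec in Hv as [t2 [_ Hv]].
  apply exists_below_spec in Hv as [t3 [_ Hv]].
  apply violation_at_spec in Hv as [Hc Hside]. apply common_at_spec in Hc as [Hdef Heq].
  destruct (clock p s (enc a l x) t1) as [|m] eqn:E1; [contradiction|].
  pose proof (clock_sound f p x t1 s m eval_p E1) as Hf.
  pose proof (clock_sound g q x t2 s m eval_q (eq_sym Heq)) as Hg.
  destruct (Hsep (rho m) (ex_intro _ t1 Hf) (ex_intro _ t2 Hg)) as [Hfub Hglb].
  destruct Hside as [[H3 Hle]|[H3 Hle]];
    [destruct (clock p s (enc a l x) t3) as [|m3] eqn:E3
    |destruct (clock q s (enc a l x) t3) as [|m3] eqn:E3];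
    try contradiction; simpl in Hle; rewrite (proj2 (leb_code_spec _ _)) in Hle; try discriminate.
  - apply Hfub. exists t3. exact (clock_sound f p x t3 s m3 eval_p E3).
  - apply Hglb. exists t3. exact (clock_sound g q x t3 s m3 eval_q E3).
Qed.

Lemma no_violation_within_iff x :
  (forall s, violation_within p q ltb s (enc a l x) = false) <-> common_values_separate lt f g x.
Proof. split; [apply no_violation_within_separate | apply separate_no_violation_within]. Qed.

Lemma firstCommonValue_agree_at x d :
  agree_at lt f g x d ->
  partial_of_prog rho (FirstCommonValue p q (S (length l))) (enc a l) x = Some d.
Proof.
  intros Hd.
  destruct (least_true (fun s => common_within p q s (enc a l x))) as [s [Hs Hs']].
  { apply ex_common_within_iff, (ex_agree_at_iff lt lt_irrefl lt_trans). eauto. }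
  destruct (least_true (fun m => value_within p q s (enc a l x) m)) as [m [Hm Hm']].
  { exact (common_within_value _ _ _ _ Hs). }
  destruct (value_within_sound s x m Hm) as [Hfm Hgm].
  rewrite <- (agree_at_common lt lt_irrefl lt_trans f g x d (rho m) Hd Hfm Hgm).
  apply partial_of_prog_spec; [exact rho_inj|].
  apply (eval_firstCommonValue p q _ s); auto using length_enc.
Qed.

End ClockedSemantics.

Lemma maxPR_minPR_restriction a l D lt rho (F : bsp a l -> option D) :
  computable_poset D lt rho -> MaxPR lt rho a l F -> MinPR lt rho a l F ->
  exists (G : bsp a l -> option D) (Z : bsp a l -> Prop),
    pcomp_fun rho a l G /\ sigma1_and_pi1 a l Z /\ restriction_of F G Z.
Proof.
  intros (irr & trans & inj & surj & [pLT HpLT]) [f [[p Hp] [Hinc Hmax]]] [g [[q Hq] [_ Hmin]]].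
  set (ltb := fun u v => @decide (lt (rho u) (rho v))).
  assert (HLT : forall u v, eval pLT [u; v] (Nat.b2n (ltb u v)))
    by (intros; apply eval_decide; apply HpLT).
  set (L := S (length l)).
  assert (Hlen : forall x, length (enc a l x) = L) by (intros; apply length_enc).
  assert (HF : forall x d, F x = Some d <-> agree_at lt f g x d)
    by (intros; apply maxD_minD_some_iff; auto).
  set (Z := fun x => have_common_value f g x /\ common_values_separate lt f g x).
  assert (HZ : forall x, Z x <-> exists d, F x = Some d).
  { intros x. unfold Z. rewrite <- ex_agree_at_iff by auto.
    split; intros [d Hd]; exists d; apply HF, Hd. }
  set (G := partial_of_prog rho (FirstCommonValue p q L) (enc a l)).
  assert (HG : forall x d, agree_at lt f g x d -> G x = Some d)
    by (intros; apply (firstCommonValue_agree_at lt rho inj surj irr trans f g p q Hp Hq); auto).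
  exists G, Z. split; [|split].
  - exists (FirstCommonValue p q L). intros x m. apply partial_of_prog_spec, inj.
  - exists (fun x s => common_within p q s (enc a l x) = true),
           (fun x s => negb (violation_within p q ltb s (enc a l x)) = true).
    split; [|split].
    + apply comp_rel_of_bool with (p := PComp (CommonWithin p q L) (PProj L :: projs 0 L)).
      intros x s. apply eval_last_first; [apply Hlen|]. apply eval_commonWithin, Hlen.
    + apply comp_rel_of_bool
        with (p := PComp (IsZero (ViolationWithin p q pLT L)) (PProj L :: projs 0 L)).
      intros x s. apply eval_last_first; [apply Hlen|].
      apply eval_negb. apply eval_violationWithin; [exact HLT | apply Hlen].
    + intros x. unfold Z.
      rewrite <- (ex_common_within_iff rho inj surj f g p q Hp Hq),
              <- (no_violation_within_iff lt rho inj surj f g p q Hp Hq).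
      setoid_rewrite negb_true_iff. reflexivity.
  - intros x. split.
    + intros Hz. apply HZ in Hz as [d Hd]. rewrite Hd. symmetry. apply HG, HF, Hd.
    + intros Hz. destruct (F x) as [d|] eqn:E; [|reflexivity]. exfalso. apply Hz, HZ. eauto.
Qed.

Lemma restriction_of_total_pcomp_fun a l D rho (F G : bsp a l -> option D) Z :
  (forall x, F x <> None) -> pcomp_fun rho a l G -> restriction_of F G Z -> pcomp_fun rho a l F.
Proof.
  intros Htot [p Hp] Hres. exists p. intros x m. rewrite Hp.
  destruct (classic (Z x)) as [Hz|Hz].
  - rewrite (proj1 (Hres x) Hz). reflexivity.
  - exfalso. exact (Htot x (proj2 (Hres x) Hz)).
Qed.

(** * Climbing once stability fails *)

Lemma injective_not_listable {D : Type} (h : nat -> D) (Ls : list D) :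
  (forall i j, h i = h j -> i = j) -> ~ (forall k, In (h k) Ls).
Proof.
  intros Hinj Hin.
  assert (Hnd : NoDup (map h (seq 0 (S (length Ls)))))
    by (apply FinFun.Injective_map_NoDup; [exact Hinj | apply seq_NoDup]).
  apply NoDup_incl_length with (l' := Ls) in Hnd.
  - rewrite length_map, length_seq in Hnd. lia.
  - intros e He. apply in_map_iff in He as [k [<- _]]. apply Hin.
Qed.

Definition height (b : nat -> bool) (t : nat) : nat :=
  if exists_below t (fun t' => negb (b t')) then t else 0.

Lemma height_mono b t t' : t <= t' -> height b t <= height b t'.
Proof.
  intros Htt'. unfold height.
  destruct (exists_below t _) eqn:E; [|lia].
  apply exists_below_spec in E as [u [Hu Hbu]].
  replace (exists_below t' _) with true; [lia|].
  symmetry. apply exists_below_spec. exists u. split; [lia | exact Hbu].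
Qed.

Section Climb.
Context {X D : Type} (lt : D -> D -> Prop) (rho : nat -> D).
Hypothesis lt_irrefl : forall d, ~ lt d d.
Hypothesis lt_trans : forall d e f, lt d e -> lt e f -> lt d f.
Variable succ : nat -> nat.
Hypothesis lt_succ : forall m, lt (rho m) (rho (succ m)).

Lemma lt_iter_succ m k k' : k < k' -> lt (rho (Nat.iter k succ m)) (rho (Nat.iter k' succ m)).
Proof. induction 1; simpl; eauto. Qed.

Lemma le_iter_succ m k k' :
  k <= k' -> le_of lt (rho (Nat.iter k succ m)) (rho (Nat.iter k' succ m)).
Proof.
  intros H. destruct (Nat.eq_dec k k') as [->|]; [left; reflexivity|].
  right. apply lt_iter_succ. lia.
Qed.

Variables (anchor : X -> nat -> Prop) (stable : X -> nat -> bool) (f : X -> nat -> option D).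
Hypothesis anchor_functional : forall x m m', anchor x m -> anchor x m' -> m = m'.
Hypothesis f_spec : forall x t e,
  f x t = Some e <-> exists m, anchor x m /\ e = rho (Nat.iter (height (stable x) t) succ m).

Lemma climb_increasing : increasing2 lt f.
Proof.
  intros x t t' d e Htt' Hd He.
  apply f_spec in Hd as (m & Hm & ->). apply f_spec in He as (m' & Hm' & ->).
  rewrite (anchor_functional x m' m Hm' Hm). apply le_iter_succ, height_mono, Htt'.
Qed.

Lemma climb_unstable_infinite x t0 : stable x t0 = false -> ~ finite_nonempty (values f x).
Proof.
  intros Ht0 [[e [t Ht]] [Ls HLs]].
  apply f_spec in Ht as (m & Hm & _).
  (* after the first failure, the values [rho (succ^t m)] for [t > t0] are pairwise distinct *)
  assert (Hhigh : forall k, height (stable x) (S t0 + k) = S t0 + k).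
  { intros k. unfold height. replace (exists_below _ _) with true; [reflexivity|].
    symmetry. apply exists_below_spec. exists t0. rewrite Ht0. split; [lia | reflexivity]. }
  apply (injective_not_listable (fun k => rho (Nat.iter (S t0 + k) succ m)) Ls).
  - intros i j Eij. destruct (Nat.lt_trichotomy i j) as [Hij|[Hij|Hij]]; auto; exfalso;
      [pose proof (lt_iter_succ m (S t0 + i) (S t0 + j) ltac:(lia)) as Hlt
      | pose proof (lt_iter_succ m (S t0 + j) (S t0 + i) ltac:(lia)) as Hlt];
      rewrite Eij in Hlt; exact (lt_irrefl _ Hlt).
  - intros k. apply HLs. exists (S t0 + k). apply f_spec. exists m. rewrite Hhigh. auto.
Qed.

Lemma climb_stable_values x :
  (forall t, stable x t = true) -> forall t e, f x t = Some e <-> exists m, anchor x m /\ e = rho m.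
Proof.
  intros Hs t e. rewrite f_spec. unfold height.
  replace (exists_below t _) with false; [reflexivity|].
  symmetry. apply not_true_iff_false. intros E. apply exists_below_spec in E as [u [_ Hu]].
  rewrite Hs in Hu. discriminate.
Qed.

Lemma climb_maxD (F : X -> option D) :
  (forall x, (forall t, stable x t = true) ->
     forall d, F x = Some d <-> exists m, anchor x m /\ d = rho m) ->
  (forall x, (exists t, stable x t = false) -> F x = None) ->
  is_maxD lt f F.
Proof.
  intros HFstable HFunstable x d.
  destruct (classic (exists t, stable x t = false)) as [[t0 Ht0]|Hstable].
  - rewrite (HFunstable x (ex_intro _ t0 Ht0)). split; [discriminate|].
    intros [Hfin _]. exfalso. exact (climb_unstable_infinite x t0 Ht0 Hfin).
  - assert (Hs : forall t, stable x t = true)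
      by (intros t; apply not_false_iff_true; intros E; eauto).
    pose proof (climb_stable_values x Hs) as Hflat.
    rewrite (HFstable x Hs). split.
    + intros (m & Hm & ->).
      assert (Hval : forall e, values f x e <-> e = rho m).
      { intros e. split.
        - intros [t Ht]. apply Hflat in Ht as (m' & Hm' & ->).
          rewrite (anchor_functional x m' m); auto.
        - intros ->. exists 0. apply Hflat. eauto. }
      split; [split|split].
      * exists (rho m). apply Hval. reflexivity.
      * exists [rho m]. intros e He. apply Hval in He. left. auto.
      * apply Hval. reflexivity.
      * intros e He. apply Hval in He. left. auto.
    + intros [_ [[t Ht] _]]. apply Hflat in Ht. exact Ht.
Qed.

End Climb.

(* On [[m]], the least [k] with [rho m < rho k]. *)
Definition SuccP (pLT : prog) : prog := PMu (IsZero (PComp pLT [PProj 1; PProj 0])).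

Definition Chain (pLT : prog) : prog := PRec (PProj 0) (PComp (SuccP pLT) [PProj 1]).

Definition Height (pQ : prog) (L : nat) : prog :=
  Cond (Bex L (S L) (IsZero (PComp pQ (projs 1 L ++ [PProj 0])))) (PProj L) PZero.

Definition Witness (pR : prog) (L : nat) : prog := PMu (IsZero (PComp pR (projs 1 L ++ [PProj 0]))).

(* The witness is computed only to make the result undefined outside the Σ⁰₁ set. *)
Definition ClimbP (pG pR pQ pLT : prog) (L : nat) : prog :=
  PComp (PComp (Chain pLT) [PProj 2; PProj 0]) [PComp pG (projs 0 L); Witness pR L; Height pQ L].

Lemma eval_chain pLT (succ : nat -> nat) c d :
  (forall m, eval (SuccP pLT) [m] (succ m)) -> eval (Chain pLT) [c; d] (Nat.iter c succ d).
Proof.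
  intros Hsucc. apply eval_rec; [constructor; reflexivity|]. intros j acc.
  econstructor; [|apply Hsucc]. repeat constructor.
Qed.

Section ClimbProgram.
Variables (pG pR pQ pLT : prog) (L : nat) (succ : nat -> nat).
Variables (xs : list nat) (rtest qtest : nat -> bool).
Hypothesis length_xs : length xs = L.
Hypothesis eval_pR : forall u, eval pR (xs ++ [u]) (Nat.b2n (rtest u)).
Hypothesis eval_pQ : forall u, eval pQ (xs ++ [u]) (Nat.b2n (qtest u)).
Hypothesis eval_succP : forall m, eval (SuccP pLT) [m] (succ m).

Lemma eval_shifted_test p (b : nat -> bool) t u :
  (forall u, eval p (xs ++ [u]) (Nat.b2n (b u))) ->
  eval (PComp p (projs 1 L ++ [PProj 0])) (u :: xs ++ [t]) (Nat.b2n (b u)).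
Proof.
  intros Hp. econstructor; [|apply Hp].
  apply Forall2_app; [rewrite <- length_xs; apply (eval_projs [u] xs [t])|].
  repeat constructor.
Qed.

Lemma eval_height t : eval (Height pQ L) (xs ++ [t]) (height qtest t).
Proof.
  unfold height.
  match goal with |- eval _ _ (if ?b then _ else _) =>
    replace (if b then t else 0) with (match Nat.b2n b with 0 => 0 | S _ => t end)
      by (destruct b; reflexivity) end.
  apply eval_cond;
    [| constructor; rewrite nth_error_app2, length_xs, Nat.sub_diag by lia; reflexivity
     | constructor].
  apply eval_bex; [rewrite length_app, length_xs; simpl; lia
                  | rewrite nth_error_app2, length_xs, Nat.sub_diag by lia; reflexivity|].
  intros u. apply eval_negb, eval_shifted_test, eval_pQ.
Qed.

Lemma eval_witness t w :
  eval (Witness pR L) (xs ++ [t]) w <-> rtest w = true /\ forall j, j < w -> rtest j = false.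
Proof. apply eval_mu_isZero. intros u. apply eval_shifted_test, eval_pR. Qed.

Lemma eval_climb t y :
  eval (ClimbP pG pR pQ pLT L) (xs ++ [t]) y <->
  exists m, eval pG xs m /\ (exists w, rtest w = true) /\ y = Nat.iter (height qtest t) succ m.
Proof.
  assert (Hxs : Forall2 (fun g v => eval g (xs ++ [t]) v) (projs 0 L) xs)
    by (rewrite <- length_xs; apply (eval_projs [] xs [t])).
  split.
  - intros E. apply eval_comp_inv in E as (vs & Hvs & Hf).
    destruct vs as [|v1 [|w [|v3 [|]]]]; try solve [inversion Hvs as [|? ? ? ? _ Hvs1];
      inversion Hvs1 as [|? ? ? ? _ Hvs2]; inversion Hvs2 as [|? ? ? ? _ Hvs3]; inversion Hvs3].
    apply Forall2_cons_iff in Hvs as [H1 Hvs]. apply Forall2_cons_iff in Hvs as [Hw Hvs].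
    apply Forall2_cons_iff in Hvs as [H3 _].
    rewrite (eval_comp_iff _ _ _ _ _ Hxs) in H1.
    rewrite (eval_functional _ _ _ _ H3 (eval_height t)) in Hf.
    exists v1. split; [exact H1|]. split; [exists w; apply eval_witness in Hw; apply Hw|].
    apply (eval_comp_iff _ _ _ [height qtest t; v1]) in Hf; [|repeat constructor].
    apply (eval_functional _ _ _ _ Hf). apply eval_chain, eval_succP.
  - intros (m & Hm & Hr & ->).
    destruct (least_true rtest Hr) as [w Hw].
    apply ev_comp with (ys := [m; w; height qtest t]).
    2: econstructor; [repeat constructor | apply eval_chain, eval_succP].
    constructor; [apply (eval_comp_iff _ _ _ _ _ Hxs), Hm|].
    constructor; [apply eval_witness, Hw|]. constructor; [apply eval_height | constructor].
Qed.

End ClimbProgram.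

Lemma eval_succP_exists D lt (rho : nat -> D) pLT :
  (forall d, exists e, lt d e) -> (forall d, exists n, rho n = d) ->
  (forall u v, eval pLT [u; v] (Nat.b2n (@decide (lt (rho u) (rho v))))) ->
  exists succ : nat -> nat, forall m, eval (SuccP pLT) [m] (succ m) /\ lt (rho m) (rho (succ m)).
Proof.
  intros Hnomax Hsurj HLT.
  assert (Hex : forall m, exists k, eval (SuccP pLT) [m] k /\ lt (rho m) (rho k)).
  { intros m. set (b := fun k => @decide (lt (rho m) (rho k))).
    destruct (least_true b) as [k Hk].
    { destruct (Hnomax (rho m)) as [e He]. destruct (Hsurj e) as [n <-].
      exists n. apply decide_spec, He. }
    exists k. split; [|apply decide_spec, Hk].
    apply (eval_mu_isZero _ _ b); [|exact Hk].
    intros j. econstructor; [|apply HLT]. repeat constructor. }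
  exists (fun m => proj1_sig (constructive_indefinite_description _ (Hex m))).
  intros m. exact (proj2_sig (constructive_indefinite_description _ (Hex m))).
Qed.

Lemma restriction_of_sigma1_pi1 {X D : Type} (F G : X -> option D) (Z : X -> Prop)
    (R Q : X -> nat -> Prop) x :
  restriction_of F G Z -> (Z x <-> (exists t, R x t) /\ (forall t, Q x t)) ->
  ((forall t, Q x t) -> forall d, F x = Some d <-> G x = Some d /\ exists t, R x t) /\
  ((exists t, ~ Q x t) -> F x = None).
Proof.
  intros Hres HZ. split.
  - intros HQ d. destruct (classic (exists t, R x t)) as [HR|HR].
    + rewrite (proj1 (Hres x)) by (apply HZ; auto). tauto.
    + rewrite (proj2 (Hres x)) by (rewrite HZ; tauto). split; [discriminate | tauto].
  - intros [t Ht]. apply (proj2 (Hres x)). rewrite HZ. intros [_ HQ]. exact (Ht (HQ t)).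
Qed.

Lemma restriction_MaxPR a l D lt rho (G F : bsp a l -> option D) (Z : bsp a l -> Prop) :
  computable_poset D lt rho -> (forall d, exists e, lt d e) ->
  pcomp_fun rho a l G -> sigma1_and_pi1 a l Z -> restriction_of F G Z -> MaxPR lt rho a l F.
Proof.
  intros (irr & trans & inj & surj & [pLT HpLT]) Hnomax [pG HpG]
    (R & Q & [pR HpR] & [pQ HpQ] & HZ) Hres.
  assert (HLT : forall u v, eval pLT [u; v] (Nat.b2n (@decide (lt (rho u) (rho v)))))
    by (intros; apply eval_decide; apply HpLT).
  destruct (eval_succP_exists D lt rho pLT Hnomax surj HLT) as [succ Hsucc].
  set (qb := fun x u => @decide (Q x u)).
  set (C := ClimbP pG pR pQ pLT (S (length l))).
  set (f := fun x t => partial_of_prog rho C (fun u => enc a l (fst u) ++ [snd u]) (x, t)).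
  set (anchor := fun x m => G x = Some (rho m) /\ exists u, R x u).
  assert (f_spec : forall x t e,
            f x t = Some e <-> exists m, anchor x m /\ e = rho (Nat.iter (height (qb x) t) succ m)).
  { intros x t e. destruct (surj e) as [y <-]. unfold f.
    rewrite <- (partial_of_prog_spec rho C _ (x, t) y inj). simpl. unfold C.
    rewrite (eval_climb _ _ _ _ _ succ _ (fun u => @decide (R x u)) (qb x));
      [| apply length_enc
       | intros; apply eval_decide; apply HpR
       | intros; apply eval_decide; apply HpQ
       | intros; apply Hsucc].
    setoid_rewrite decide_spec. unfold anchor. setoid_rewrite <- HpG. split.
    - intros (m & Hm & HR & ->). eauto.
    - intros (m & [Hm HR] & Ey). apply inj in Ey. subst y. eauto. }
  assert (anchor_functional : forall x m m', anchor x m -> anchor x m' -> m = m').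
  { intros x m m' [Hm _] [Hm' _]. apply inj. congruence. }
  exists f. split; [|split].
  - exists C. intros x t m.
    exact (partial_of_prog_spec rho C (fun u => enc a l (fst u) ++ [snd u]) (x, t) m inj).
  - exact (climb_increasing lt rho trans succ (fun m => proj2 (Hsucc m)) anchor qb f
             anchor_functional f_spec).
  - apply (climb_maxD lt rho irr trans succ (fun m => proj2 (Hsucc m)) anchor qb f
             anchor_functional f_spec);
      intros x; destruct (restriction_of_sigma1_pi1 F G Z R Q x Hres (HZ x)) as [HFQ HFnQ].
    + intros Hstable d. rewrite HFQ by (intros t; apply decide_spec, Hstable).
      unfold anchor. split; [intros [Hd HR]; destruct (surj d) as [m <-]; eauto|].
      intros (m & [Hm HR] & ->). auto.
    + intros [t Ht]. apply HFnQ. exists t. intros HQ. apply decide_spec in HQ. unfold qb in Ht.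
      congruence.
Qed.

(** * Duality *)

Lemma computable_poset_dual D lt (rho : nat -> D) :
  computable_poset D lt rho -> computable_poset D (fun d e => lt e d) rho.
Proof.
  intros (irr & trans & inj & surj & [p Hp]). repeat split; eauto.
  exists (PComp p [PProj 1; PProj 0]). intros m n.
  split; intros H; econstructor; [| apply (proj1 (Hp n m)), H | | apply (proj2 (Hp n m)), H];
    repeat constructor.
Qed.

Lemma MaxPR_dual_MinPR D lt (rho : nat -> D) a l F :
  MaxPR (fun d e => lt e d) rho a l F -> MinPR lt rho a l F.
Proof.
  assert (Hle : forall d e, le_of (fun d e => lt e d) d e <-> le_of lt e d)
    by (unfold le_of; split; intros [H|H]; auto).
  intros [f [Hf [Hinc Hmax]]]. exists f. split; [exact Hf|]. split.
  - intros x t t' d e Htt' Hd He. apply Hle. eapply Hinc; eauto.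
  - intros x d. rewrite (Hmax x d). unfold is_maximum, is_minimum.
    split; intros (Hfin & Hd & Hbound); (split; [exact Hfin | split; [exact Hd|]]);
      intros e He; apply Hle; auto.
Qed.

Theorem mainTheorem9 (a : atom) (l : list atom)
    (D : Type) (lt : D -> D -> Prop) (rho : nat -> D)
    (HD : computable_poset D lt rho) :
  (* 1 *)
  (forall F : bsp a l -> option D,
      MaxPR lt rho a l F -> MinPR lt rho a l F ->
      exists (G : bsp a l -> option D) (Z : bsp a l -> Prop),
        pcomp_fun rho a l G /\ sigma1_and_pi1 a l Z /\ restriction_of F G Z) /\
  (forall F : bsp a l -> option D,
      (forall x, F x <> None) ->
      MaxPR lt rho a l F -> MinPR lt rho a l F -> pcomp_fun rho a l F) /\
  (* 2 *)
  ((forall d, exists e, lt d e) ->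
     forall (G F : bsp a l -> option D) (Z : bsp a l -> Prop),
       pcomp_fun rho a l G -> sigma1_and_pi1 a l Z -> restriction_of F G Z ->
       MaxPR lt rho a l F) /\
  ((forall d, exists e, lt e d) ->
     forall (G F : bsp a l -> option D) (Z : bsp a l -> Prop),
       pcomp_fun rho a l G -> sigma1_and_pi1 a l Z -> restriction_of F G Z ->
       MinPR lt rho a l F) /\
  (* 3 *)
  ((forall d, exists e, lt d e) -> (forall d, exists e, lt e d) ->
     forall F : bsp a l -> option D,
       (MaxPR lt rho a l F /\ MinPR lt rho a l F) <->
       (exists (G : bsp a l -> option D) (Z : bsp a l -> Prop),
          pcomp_fun rho a l G /\ sigma1_and_pi1 a l Z /\ restriction_of F G Z)).
Proof.
  assert (Hmin : (forall d, exists e, lt e d) ->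
     forall (G F : bsp a l -> option D) (Z : bsp a l -> Prop),
       pcomp_fun rho a l G -> sigma1_and_pi1 a l Z -> restriction_of F G Z -> MinPR lt rho a l F).
  { intros Hnomin G F Z HG HZ Hres. apply MaxPR_dual_MinPR.
    exact (restriction_MaxPR a l D _ rho G F Z (computable_poset_dual D lt rho HD) Hnomin
             HG HZ Hres). }
  split; [|split; [|split; [|split]]].
  - intros F. exact (maxPR_minPR_restriction a l D lt rho F HD).
  - intros F Htot Hmax Hmin'.
    destruct (maxPR_minPR_restriction a l D lt rho F HD Hmax Hmin') as (G & Z & HG & _ & Hres).
    exact (restriction_of_total_pcomp_fun a l D rho F G Z Htot HG Hres).
  - intros Hnomax G F Z. exact (restriction_MaxPR a l D lt rho G F Z HD Hnomax).
  - exact Hmin.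
  - intros Hnomax Hnomin F. split.
    + intros [Hmax Hmin']. exact (maxPR_minPR_restriction a l D lt rho F HD Hmax Hmin').
    + intros (G & Z & HG & HZ & Hres).
      split; [exact (restriction_MaxPR a l D lt rho G F Z HD Hnomax HG HZ Hres)
             | exact (Hmin Hnomin G F Z HG HZ Hres)].
Qed.
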